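(* For all positive integers $n$ and $j$, \[ \breve K\big(S_n(0)^{5j+1}S_n(1)\big)=\breve K\big(S_n(0)\,S_n(1)^{3j+1}\big). \]
   Context: For finite sequences of positive integers, $\alpha\beta$ denotes concatenation and $\alpha^k$ the concatenation of $k$ copies of $\alpha$. The continued fraction $[a_1;a_2:\dots:a_k]$ means $a_1+1/(a_2+1/(\cdots+1/a_k))$. For a sequence $(a_1,\dots,a_k)$ of positive integers with $k\ge2$, $\breve K(a_1,\dots,a_k)$ is the integer $c$ where $[a_1;a_2:\dots:a_{k-1}]=c/d$ with $\gcd(c,d)=1$, $c,d>0$ (the last entry $a_k$ is omitted). For a positive integer $n$ let $a_n=n^2+3$, $b_n=n^4+5n^2+5$, $S_n(0)=(na_n,na_n)$ and $S_n(1)=(nb_n,nb_n)$. *)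

From HB Require Import structures.
From mathcomp Require Import all_boot all_order all_algebra.
Set Implicit Arguments. Unset Strict Implicit. Unset Printing Implicit Defensive.
Import Order.TTheory GRing.Theory Num.Theory.

Local Open Scope ring_scope.

(* Value of the finite continued fraction [a_1; a_2 : ... : a_k] as a
   rational number: a_1 + 1/(a_2 + 1/(... + 1/a_k)).  For the empty
   sequence (never used) we return 0. *)
Fixpoint cf_value (s : seq nat) : rat :=
  match s with
  | [::] => 0
  | [:: a] => a%:R
  | a :: t => a%:R + (cf_value t)^-1
  end.

(* Kbreve (a_1,...,a_k): the numerator c of [a_1;...;a_{k-1}] = c/d in
   lowest terms with c,d > 0 (the last entry is dropped).  [numq] is the
   numerator of the reduced representation with positive denominator;
   for positive entries the value is positive so c = numq. *)
Definition Kbreve (s : seq nat) : int := numq (cf_value (take (size s).-1 s)).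

Definition a_n (n : nat) : nat := (n ^ 2 + 3)%N.
Definition b_n (n : nat) : nat := (n ^ 4 + 5 * n ^ 2 + 5)%N.
Definition S0 (n : nat) : seq nat := [:: (n * a_n n)%N; (n * a_n n)%N].
Definition S1 (n : nat) : seq nat := [:: (n * b_n n)%N; (n * b_n n)%N].

Definition seqpow (T : Type) (s : seq T) (k : nat) : seq T := flatten (nseq k s).

(* Kbreve of a sequence ending in (y, z) is the top-left entry of the product of
   the matrices M(a) = [[a, 1], [1, 0]] over the sequence with z dropped: numerator and
   denominator of a continued fraction form the first column of that product, and
   they are coprime because its determinant is +-1.  Writing P and Q for the
   matrices of S_n(0) and S_n(1) and b = n b_n, the two sides become the (0, 0)
   entries of P^(5j+1) M(b) and P Q^(3j) M(b).  As P^5 and Q^3 have the same trace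
   and determinant, Cayley-Hamilton makes both sides satisfy the same second-order
   linear recurrence in j, and they agree at j = 0 and j = 1 by a polynomial
   identity in n. *)

From mathcomp Require Import all_boot all_order all_algebra.
From mathcomp Require Import ring.
Import Order.TTheory GRing.Theory Num.Theory.

Set Implicit Arguments.
Unset Strict Implicit.
Unset Printing Implicit Defensive.

Local Open Scope ring_scope.

Section Matrix22.
Variable R : comNzRingType.

Definition mx22 (a b c d : R) : 'M[R]_2 :=
  \matrix_(i, j) if i == 0 then (if j == 0 then a else b)
                 else (if j == 0 then c else d).

Lemma mx22_entries (X : 'M[R]_2) : X = mx22 (X 0 0) (X 0 1) (X 1 0) (X 1 1).
Proof.
apply/matrixP => i j; rewrite mxE.
by case: i => [[|[|//]] ?]; case: j => [[|[|//]] ?]; congr (X _ _); apply: val_inj.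
Qed.

Lemma mul_mx22 a b c d a' b' c' d' :
  mx22 a b c d * mx22 a' b' c' d' =
  mx22 (a * a' + b * c') (a * b' + b * d') (c * a' + d * c') (c * b' + d * d').
Proof.
rewrite -mulmxE; apply/matrixP => i j; rewrite !mxE !big_ord_recl big_ord0 !mxE addr0 /=.
by case: (i == 0); case: (j == 0).
Qed.

Lemma mxtrace_mx22 a b c d : \tr (mx22 a b c d) = a + d.
Proof. by rewrite /mxtrace !big_ord_recl big_ord0 !mxE addr0. Qed.

Lemma det_mx22 a b c d : \det (mx22 a b c d) = a * d - b * c.
Proof.
rewrite (expand_det_row _ 0) !big_ord_recl big_ord0 /cofactor !det_mx11 !mxE /=.
by rewrite addr0 expr0 expr1 mul1r mulN1r mulrN.
Qed.

Lemma Cayley_Hamilton_mx22 (X : 'M[R]_2) : X ^+ 2 = \tr X *: X - (\det X)%:M.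
Proof.
rewrite [X]mx22_entries expr2 mul_mx22 mxtrace_mx22 det_mx22.
apply/matrixP => i j; rewrite !mxE.
by case: i => [[|[|//]] ?]; case: j => [[|[|//]] ?] /=; ring.
Qed.

End Matrix22.

Lemma eq_second_order_rec (R : pzRingType) (t d : R) (f g : nat -> R) :
  (forall k, f k.+2 = t * f k.+1 - d * f k) ->
  (forall k, g k.+2 = t * g k.+1 - d * g k) ->
  f 0%N = g 0%N -> f 1%N = g 1%N -> f =1 g.
Proof.
move=> recf recg f0 f1 k.
suff [] : f k = g k /\ f k.+1 = g k.+1 by [].
by elim: k => [|k [IHk IHk1]] //; rewrite recf recg IHk IHk1.
Qed.

Section MatrixPowerRecurrence.
Variables (R : comNzRingType) (n : nat) (X : 'M[R]_n.+1) (t d : R).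
Hypothesis char_X : X ^+ 2 = t *: X - d%:M.

Lemma mx_expr_rec k : X ^+ k.+2 = t *: X ^+ k.+1 - d *: X ^+ k.
Proof.
by rewrite -add2n exprD char_X mulrBl -scalerAl -exprS -scalemx1 -scalerAl mul1r.
Qed.

Lemma mx_expr_entry_rec (U V : 'M[R]_n.+1) i j k :
  (U * X ^+ k.+2 * V) i j = t * (U * X ^+ k.+1 * V) i j - d * (U * X ^+ k * V) i j.
Proof.
by rewrite mx_expr_rec mulrBr mulrBl -!scalerAr -!scalerAl !mxE.
Qed.

End MatrixPowerRecurrence.

Definition cf_mx (R : comNzRingType) (a : R) : 'M[R]_2 := mx22 a 1 1 0.

Lemma mul_cf_mx (R : comNzRingType) (a : R) (X : 'M[R]_2) :
  cf_mx a * X = mx22 (a * X 0 0 + X 1 0) (a * X 0 1 + X 1 1) (X 0 0) (X 0 1).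
Proof. by rewrite [X]mx22_entries mul_mx22 !mxE /= !mul1r !mul0r !addr0. Qed.

Definition positive_seq (s : seq nat) : bool := all (fun a => 0 < a)%N s.

Lemma positive_seq_cons a s :
  positive_seq (a :: s) = (0 < a)%N && positive_seq s.
Proof. by []. Qed.

Lemma positive_seq_cat s t :
  positive_seq (s ++ t) = positive_seq s && positive_seq t.
Proof. exact: all_cat. Qed.

Lemma positive_seqpow s k : positive_seq s -> positive_seq (seqpow s k).
Proof.
rewrite /positive_seq => pos_s; elim: k => [|k IHk] //.
by rewrite /seqpow /= all_cat pos_s.
Qed.

Definition continuant_mx (s : seq nat) : 'M[int]_2 := \prod_(a <- s) cf_mx a%:Z.

Lemma continuant_mx_cons a s : continuant_mx (a :: s) = cf_mx a%:Z * continuant_mx s.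
Proof. exact: big_cons. Qed.

Lemma continuant_mx_cat s t :
  continuant_mx (s ++ t) = continuant_mx s * continuant_mx t.
Proof. exact: big_cat. Qed.

Lemma continuant_mx_seqpow s k : continuant_mx (seqpow s k) = continuant_mx s ^+ k.
Proof.
elim: k => [|k IHk]; first exact: big_nil.
by rewrite exprS -IHk -continuant_mx_cat.
Qed.

Lemma det_continuant_mx s : \det (continuant_mx s) = (-1) ^+ size s.
Proof.
elim: s => [|a s IHs]; first by rewrite /continuant_mx big_nil det1.
by rewrite continuant_mx_cons -mulmxE det_mulmx IHs det_mx22 exprS; ring.
Qed.

Lemma coprimez_continuant_mx s :
  coprimez (continuant_mx s 0 0) (continuant_mx s 1 0).
Proof.
set M := continuant_mx s; set e : int := (-1) ^+ size s.
have detM : M 0 0 * M 1 1 - M 0 1 * M 1 0 = e.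
  by rewrite -det_mx22 -mx22_entries det_continuant_mx.
apply/coprimezP; exists (e * M 1 1, - (e * M 0 1)) => /=.
by rewrite -(sqrr_sign _ (size s) : e ^+ 2 = 1) expr2 -[X in _ = _ * X]detM; ring.
Qed.

Lemma continuant_mx_gt0 s : positive_seq s ->
  0 < continuant_mx s 0 0 /\ 0 <= continuant_mx s 1 0.
Proof.
elim: s => [|a s IHs]; first by rewrite /continuant_mx big_nil !mxE.
rewrite positive_seq_cons => /andP [a_gt0 /IHs [M00_gt0 M10_ge0]].
rewrite continuant_mx_cons mul_cf_mx !mxE /= (ltW M00_gt0).
by rewrite ltr_wpDr // mulr_gt0 // ltz_nat.
Qed.

Lemma cf_value_continuant s : s != [::] -> positive_seq s ->
  cf_value s = (continuant_mx s 0 0)%:~R / (continuant_mx s 1 0)%:~R.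
Proof.
elim: s => [|a [|b s] IHs] // _; rewrite positive_seq_cons => /andP [_ pos_bs].
  by rewrite continuant_mx_cons /continuant_mx big_nil mulr1 !mxE /= divr1.
have -> : cf_value [:: a, b & s] = a%:R + (cf_value (b :: s))^-1 by [].
have [M00_gt0 _] := continuant_mx_gt0 pos_bs.
rewrite IHs // invf_div [continuant_mx (a :: _)]continuant_mx_cons mul_cf_mx !mxE /=.
set p := continuant_mx _ 0 0 in M00_gt0 *; set q := continuant_mx _ 1 0.
have p_neq0 : (p%:~R : rat) != 0 by rewrite intr_eq0 gt_eqF.
by rewrite rmorphD rmorphM /= pmulrn; field.
Qed.

Lemma numq_cf_value s : s != [::] -> positive_seq s ->
  numq (cf_value s) = continuant_mx s 0 0.
Proof.
move=> s_neq0 pos_s; rewrite cf_value_continuant // coprimeq_num; last exact: coprimez_continuant_mx.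
case: s s_neq0 pos_s => [|a s] // _.
rewrite positive_seq_cons => /andP [_ /continuant_mx_gt0 [M00_gt0 _]].
by rewrite continuant_mx_cons mul_cf_mx !mxE /= gtr0_sg // mul1r.
Qed.

Section PolynomialIdentity.
Variables (R : comNzRingType) (x : R).
Let A := x * (x ^+ 2 + 3).
Let B := x * (x ^+ 4 + 5 * x ^+ 2 + 5).
Let P := cf_mx A ^+ 2.
Let Q := cf_mx B ^+ 2.

Lemma mxtrace_P5_Q3 : \tr (P ^+ 5) = \tr (Q ^+ 3).
Proof.
by rewrite /P /Q /cf_mx !exprS expr0 !mulr1 !mul_mx22 !mxtrace_mx22 /A /B; ring.
Qed.

Lemma det_P5_Q3 : \det (P ^+ 5) = \det (Q ^+ 3).
Proof.
by rewrite /P /Q /cf_mx !exprS expr0 !mulr1 !mul_mx22 !det_mx22 /A /B; ring.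
Qed.

Lemma P6_Q3_entry : (P * P ^+ 5 * cf_mx B) 0 0 = (P * Q ^+ 3 * cf_mx B) 0 0.
Proof.
by rewrite /P /Q /cf_mx !exprS expr0 !mulr1 !mul_mx22 !mxE /= /A /B; ring.
Qed.

Lemma continuant_identity j :
  (P ^+ (5 * j + 1) * cf_mx B) 0 0 = (P * Q ^+ (3 * j) * cf_mx B) 0 0.
Proof.
rewrite addn1 exprS !exprM.
pose f k := (P * (P ^+ 5) ^+ k * cf_mx B) 0 0.
pose g k := (P * (Q ^+ 3) ^+ k * cf_mx B) 0 0.
apply: (@eq_second_order_rec _ (\tr (P ^+ 5)) (\det (P ^+ 5)) f g) => [k|k||].
- exact/mx_expr_entry_rec/Cayley_Hamilton_mx22.
- rewrite mxtrace_P5_Q3 det_P5_Q3; exact/mx_expr_entry_rec/Cayley_Hamilton_mx22.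
- by rewrite /f /g !expr0.
- by rewrite /f /g !expr1 P6_Q3_entry.
Qed.
End PolynomialIdentity.

Lemma seqpowS (T : Type) (s : seq T) k : seqpow s (k + 1) = seqpow s k ++ s.
Proof. by rewrite /seqpow nseqD flatten_cat /= cats0. Qed.

Lemma Kbreve_cat2 s y z : positive_seq s -> (0 < y)%N ->
  Kbreve (s ++ [:: y; z]) = (continuant_mx s * cf_mx y%:Z) 0 0.
Proof.
move=> pos_s y_gt0; rewrite /Kbreve -cat_rcons size_cat addn1 /= take_size_cat //.
rewrite numq_cf_value -?size_eq0 ?size_rcons // /positive_seq ?all_rcons ?y_gt0 //.
by rewrite -cats1 continuant_mx_cat /continuant_mx big_seq1.
Qed.

Lemma n_a_n_gt0 n : (0 < n)%N -> (0 < n * a_n n)%N.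
Proof. by move=> n_gt0; rewrite muln_gt0 n_gt0 /a_n addn3. Qed.

Lemma n_b_n_gt0 n : (0 < n)%N -> (0 < n * b_n n)%N.
Proof. by move=> n_gt0; rewrite muln_gt0 n_gt0 /b_n addnS. Qed.

Lemma n_a_nE n : (n * a_n n)%:Z = n%:Z * (n%:Z ^+ 2 + 3).
Proof. by rewrite /a_n -natz natrM natrD natrX natz. Qed.

Lemma n_b_nE n : (n * b_n n)%:Z = n%:Z * (n%:Z ^+ 4 + 5 * n%:Z ^+ 2 + 5).
Proof. by rewrite /b_n -natz natrM !natrD !natrX natz; ring. Qed.

Lemma continuant_mx_S0 n : continuant_mx (S0 n) = cf_mx (n%:Z * (n%:Z ^+ 2 + 3)) ^+ 2.
Proof. by rewrite /continuant_mx /S0 !big_cons big_nil mulr1 n_a_nE expr2. Qed.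

Lemma continuant_mx_S1 n :
  continuant_mx (S1 n) = cf_mx (n%:Z * (n%:Z ^+ 4 + 5 * n%:Z ^+ 2 + 5)) ^+ 2.
Proof. by rewrite /continuant_mx /S1 !big_cons big_nil mulr1 n_b_nE expr2. Qed.

Theorem proposition2 (n j : nat) (hn : (0 < n)%N) (hj : (0 < j)%N) :
  Kbreve (seqpow (S0 n) (5 * j + 1) ++ S1 n)
  = Kbreve (S0 n ++ seqpow (S1 n) (3 * j + 1)).
Proof.
have pos_S0 : positive_seq (S0 n) by rewrite /positive_seq /= n_a_n_gt0.
have pos_S1 : positive_seq (S1 n) by rewrite /positive_seq /= n_b_n_gt0.
rewrite [S1 n]/S1 Kbreve_cat2 ?positive_seqpow ?n_b_n_gt0 //.
rewrite [seqpow _ (3 * j + 1)]seqpowS catA Kbreve_cat2; last exact: n_b_n_gt0.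
  rewrite continuant_mx_cat !continuant_mx_seqpow continuant_mx_S0 continuant_mx_S1.
  by rewrite n_b_nE continuant_identity.
by rewrite positive_seq_cat pos_S0 positive_seqpow.
Qed.
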